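(* Let $d\ge1$ and $a_1,\dots,a_d>0$, and define $G:(0,\infty)\to\mathbb{R}$ by $$G(k)=2k\sum_{j=1}^d\tan\left(\frac{\pi}{2}\left(\left\lceil\frac{ka_j}{\pi}\right\rceil-\frac{ka_j}{\pi}\right)\right).$$ Then: (i) a point $k>0$ is a discontinuity of $G$ if and only if $k=m\pi/a_j$ for some $j\in\{1,\dots,d\}$ and some $m\in\mathbb{N}$; (ii) $G$ is strictly decreasing on each interval of continuity; (iii) for every $m\in\mathbb{N}$ and $j\in\{1,\dots,d\}$, $\lim_{k\searrow m\pi/a_j}G(k)=+\infty$.
   Context: $\lceil\cdot\rceil$ denotes the ceiling function and $\mathbb{N}=\{1,2,3,\dots\}$. *)

From HB Require Import structures.
From mathcomp Require Import all_boot all_order all_algebra.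
From mathcomp Require Import all_classical all_reals all_analysis.
Set Implicit Arguments. Unset Strict Implicit. Unset Printing Implicit Defensive.
Import Order.TTheory GRing.Theory Num.Theory.
Import numFieldNormedType.Exports.
Local Open Scope ring_scope.

Definition Gfun (R : realType) (d : nat) (a : 'I_d -> R) (k : R) : R :=
  2 * k * \sum_(j < d)
     tan (pi / 2 * ((Num.ceil (k * a j / pi))%:~R - k * a j / pi)).

From HB Require Import structures.
From mathcomp Require Import all_boot all_order all_algebra.
From mathcomp Require Import all_classical all_reals all_analysis.
From mathcomp Require Import ring lra.
Import Order.TTheory GRing.Theory Num.Theory.
Import numFieldNormedType.Exports.
Local Open Scope classical_set_scope.
Local Open Scope ring_scope.

(* Put x_j = k a_j / pi and phase x = pi/2 (ceil x - x), which lies in [0, pi/2), so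
   that G k = 2 sum_j k tan (phase x_j).  Off the points m pi / a_j every ceiling is
   locally constant, so G is continuous there.  While ceil x_j = c stays constant,
   k = (c pi - 2 theta) / a_j with theta = phase x_j decreasing in k, and the j-th
   summand is (c pi - 2 theta) tan theta / a_j.  For C >= pi the map
   theta |-> (C - 2 theta) tan theta is increasing on [0, pi/2): its derivative is
   ((C - 2 theta) - sin (2 theta)) / cos theta ^ 2, and sin (2 theta) = sin (pi - 2 theta)
   < pi - 2 theta.  Just to the right of m pi / a_j the phase of x_j tends to pi/2 from
   below, so the j-th summand, and with it G (all summands being nonnegative), tends to
   +oo; in particular G is discontinuous there. *)

Lemma cvg_within_near {T : Type} {U : topologicalType} (F : set_system T) {FF : Filter F}
    (f : T -> U) (l : U) (D : set U) :
  f @ F --> l -> (\forall t \near F, D (f t)) -> f @ F --> within D (nbhs l).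
Proof.
move=> fl fD P DP; apply: filterS2 fD (fl _ DP) => t Dft; exact.
Qed.

Lemma cvgry_right_not_continuous {R : realType} (f : R -> R) (x : R) :
  f y @[y --> x^'+] --> +oo -> ~ {for x, continuous f}.
Proof.
move=> fy fx; have fx_right : f y @[y --> x^'+] --> f x by exact: cvg_at_right_filter.
suff : \forall y \near x^'+, False by case/filter_ex.
near=> y; suff : f y < f y by rewrite ltxx.
apply: (@lt_le_trans _ _ (f x + 1)).
  by near: y; apply: (cvgr_lt _ fx_right); rewrite ltrDl.
by near: y; exact: cvgry_ge.
Unshelve. all: by end_near.
Qed.

Section tan_pihalf.
Context {R : realType}.
Implicit Types t x y C : R.

Lemma cos_gt0_pihalf_ge0 t : 0 <= t < pi / 2 -> 0 < cos t.
Proof.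
move=> /andP[t0 tpi]; rewrite cos_gt0_pihalf // tpi andbT.
by rewrite (lt_le_trans _ t0) // oppr_lt0 divr_gt0 ?pi_gt0.
Qed.

Lemma tan_ge0 t : 0 <= t < pi / 2 -> 0 <= tan t.
Proof.
move=> /[dup] /andP[t0 tpi] /cos_gt0_pihalf_ge0 c0; rewrite /tan divr_ge0 ?(ltW c0) //.
apply: sin_ge0_pi; rewrite t0 (le_trans (ltW tpi)) //.
by rewrite ler_pdivrMr // ler_peMr ?pi_ge0 ?ler1n.
Qed.

Lemma sin_lt_id x : 0 < x -> sin x < x.
Proof.
move=> x0; have [xpi|pix] := ltP x pi; last first.
  rewrite (le_lt_trans (sin_le1 _)) // (lt_le_trans _ pix) //.
  by rewrite (lt_le_trans _ (pi_ge2 R)) ?ltr1n.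
have [c /itvP cI] := @MVT R sin cos 0 x x0 (fun c _ => is_derive_sin c)
   (continuous_subspaceT (@continuous_sin R)).
rewrite sin0 !subr0 => ->; rewrite gtr_pMl // lt_neqAle cos_le1 andbT.
have : 0 < sin c by apply: sin_gt0_pi; rewrite cI /= (lt_trans _ xpi) ?cI.
apply: contraTneq => c1; have /eqP := cos2Dsin2 c.
by rewrite c1 expr1n -subr_eq0 addrC addKr sqrf_eq0 => /eqP ->; rewrite ltxx.
Qed.

Lemma tan_cvgy_pihalf : tan t @[t --> (pi / 2 : R)^'-] --> +oo.
Proof.
apply/cvgryPge => A; have [/andP[atanA0 atanA1] tanA] := atan_def A.
near=> t; have atanAt : atan A < t by near: t; exact: nbhs_left_gt.
have tpi : t < pi / 2 by near: t; exact: nbhs_left_lt.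
rewrite -tanA ltW // ltr_tan ?in_itv /= ?atanA0 ?atanA1 ?tpi ?(lt_trans atanA0) //.
Unshelve. all: by end_near.
Qed.

Lemma is_derive_affine_tan C t : cos t != 0 ->
  is_derive t 1 (fun s => (C - 2 * s) * tan s) ((C - 2 * t) / cos t ^+ 2 - 2 * tan t).
Proof.
move=> ct; have ? := is_derive_tan ct.
apply: trigger_derive; rewrite add0r mul1r /GRing.scale /= mulr1 mulrN [tan t * _]mulrC.
reflexivity.
Qed.

Lemma affine_tan_increasing C : pi <= C ->
  {in `[0, pi / 2[ &, {homo (fun s => (C - 2 * s) * tan s) : x y / x < y}}.
Proof.
move=> piC x y; rewrite !in_itv /= => /andP[x0 _] /andP[_ ypi] xy.
have cos_gt0 t : t \in `[x, y] -> 0 < cos t.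
  rewrite in_itv /= => /andP[xt ty]; apply: cos_gt0_pihalf_ge0.
  by rewrite (le_trans x0) //= (le_lt_trans ty).
have der t : t \in `[x, y] -> is_derive t 1 (fun s => (C - 2 * s) * tan s)
    ((C - 2 * t) / cos t ^+ 2 - 2 * tan t).
  by move=> /cos_gt0 /lt0r_neq0; exact: is_derive_affine_tan.
rewrite -subr_gt0; have [c cI ->] := MVT xy (fun t tI => der t (subset_itv_oo_cc tI))
  (derivable_within_continuous (fun t tI => @ex_derive _ _ _ _ _ _ _ (der t tI))).
rewrite mulr_gt0 ?subr_gt0 //.
move: (cI) => /subset_itv_oo_cc/cos_gt0 cos_c; move: cI; rewrite in_itv /= => /andP[xc cy].
have -> : 2 * tan c = sin (c *+ 2) / cos c ^+ 2.
  by rewrite sin_mulr2n /tan; field; exact: lt0r_neq0.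
rewrite ltr_pM2r ?invr_gt0 ?exprn_gt0 //.
have -> : sin (c *+ 2) = sin (pi - c *+ 2).
  by rewrite sinB sinpi cospi mul0r mulN1r sub0r opprK.
have := @sin_lt_id (pi - c *+ 2); rewrite mulr2n; lra.
Qed.

End tan_pihalf.

Section phase.
Context {R : realType}.
Implicit Types x b k s t : R.

Lemma ceil_gt0_natE x : 0 < x -> exists2 m : nat, (0 < m)%N & (Num.ceil x)%:~R = m%:R :> R.
Proof.
move=> x0; have c0 : 0 < Num.ceil x by rewrite -(@ltr0z R) (lt_le_trans x0 (ceil_ge x)).
exists `|Num.ceil x|%N; rewrite ?absz_gt0 ?gt_eqF //.
by rewrite pmulrn abszE gtr0_norm.
Qed.

Lemma near_ceil_eq x : x < (Num.ceil x)%:~R -> \forall y \near x, Num.ceil y = Num.ceil x.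
Proof.
move=> xc; have /andP[cx _] := ceil_itv x.
near=> y; apply: ceil_def; apply/andP; split.
  by near: y; exact: lt_nbhsr.
by near: y; exact: lt_le_nbhsl.
Unshelve. all: by end_near.
Qed.

Lemma ceil_eq_grid b k : 0 < b -> 0 < k -> (Num.ceil (k * b / pi))%:~R = k * b / pi ->
  exists2 m : nat, (0 < m)%N & k = m%:R * pi / b.
Proof.
move=> b0 k0 kb_int; have [|m m0 cE] := ceil_gt0_natE (k * b / pi).
  by rewrite !mulr_gt0 ?invr_gt0 ?pi_gt0.
by exists m; rewrite // -cE kb_int divfK ?mulfK ?gt_eqF ?pi_gt0.
Qed.

Lemma ceil_neq_grid b s t : 0 < b -> 0 < s -> s <= t ->
  Num.ceil (s * b / pi) != Num.ceil (t * b / pi) ->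
  exists2 m : nat, (0 < m)%N & s <= m%:R * pi / b < t.
Proof.
move=> b0 s0 st ceil_st.
have [|m m0 cE] := ceil_gt0_natE (s * b / pi); first by rewrite !mulr_gt0 ?invr_gt0 ?pi_gt0.
have sb_le : s * b / pi <= m%:R by rewrite -cE ceil_ge.
have tb_gt : m%:R < t * b / pi.
  rewrite -cE ltNge -ceil_le_int; apply: contra ceil_st => ceil_ts.
  by rewrite eq_le ceil_ts le_ceil // !ler_pM2r ?invr_gt0 ?pi_gt0.
move: sb_le tb_gt; rewrite ler_pdivrMr ?ltr_pdivlMr ?pi_gt0 // => sb_le tb_gt.
by exists m => //; rewrite ler_pdivlMr // ltr_pdivrMr // sb_le.
Qed.

Definition phase x : R := pi / 2 * ((Num.ceil x)%:~R - x).

Lemma phase_itv x : 0 <= phase x < pi / 2.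
Proof.
have /andP[ceil1 ceil0] := ceil_itv x.
have pi2_gt0 : 0 < pi / 2 :> R by rewrite divr_gt0 ?pi_gt0.
rewrite mulr_ge0 ?(ltW pi2_gt0) ?subr_ge0 //= gtr_pMr // ltrBlDr addrC -ltrBlDr.
by rewrite -[1]/(1%:~R) -intrB.
Qed.

Lemma tan_phase_ge0 x : 0 <= tan (phase x).
Proof. exact/tan_ge0/phase_itv. Qed.

Lemma cos_phase_neq0 x : cos (phase x) != 0.
Proof. exact/lt0r_neq0/cos_gt0_pihalf_ge0/phase_itv. Qed.

Lemma phase_natE (m : nat) x : m%:R < x <= m.+1%:R -> phase x = pi / 2 * (m.+1%:R - x).
Proof.
move=> /andP[mx xm]; rewrite /phase (@ceil_def _ _ m.+1) //.
by rewrite intrB -!pmulrn mulrSr addrK mx -mulrSr.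
Qed.

Lemma phase_cvg_right (m : nat) : phase x @[x --> m%:R^'+] --> (pi / 2 : R)^'-.
Proof.
apply: cvg_within_near; last by near=> x; have /andP[] := phase_itv x.
have phaseE : {near m%:R^'+, (fun x => pi / 2 * (m.+1%:R - x)) =1 phase}.
  near=> x; rewrite (phase_natE m) //; apply/andP; split; near: x.
    exact: nbhs_right_gt.
  by apply: nbhs_right_le; rewrite ltr_nat.
apply: cvg_trans (near_eq_cvg phaseE) _; apply: cvg_at_right_filter.
rewrite [X in _ --> X](_ : _ = pi / 2 * (m.+1%:R - m%:R)); last first.
  by rewrite -natrB // subSnn mulr1.
by apply: cvgMr; apply: cvgB; [exact: cvg_cst | exact: cvg_id].
Unshelve. all: by end_near.
Qed.

Definition Gterm b k : R := k * tan (phase (k * b / pi)).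

Lemma Gterm_ge0 b k : 0 <= k -> 0 <= Gterm b k.
Proof. by move=> k0; rewrite mulr_ge0 ?tan_phase_ge0. Qed.

Lemma GtermE b k : 0 < b -> Gterm b k =
  ((Num.ceil (k * b / pi))%:~R * pi - 2 * phase (k * b / pi)) * tan (phase (k * b / pi))
  / b.
Proof.
move=> b0; rewrite /Gterm [RHS]mulrAC; congr (_ * _); rewrite /phase.
(* abstract [pi], which [field] would otherwise unfold *)
move: (pi_gt0 R); generalize (@pi R) => p p0.
by field; rewrite !gt_eqF.
Qed.

Lemma Gterm_decreasing b s t : 0 < b -> 0 < s -> s < t ->
  Num.ceil (s * b / pi) = Num.ceil (t * b / pi) -> Gterm b t < Gterm b s.
Proof.
move=> b0 s0 st ceil_st.
have sb_gt0 : 0 < s * b / pi by rewrite !mulr_gt0 ?invr_gt0 ?pi_gt0.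
have sb_lt : s * b / pi < t * b / pi by rewrite !ltr_pM2r ?invr_gt0 ?pi_gt0.
rewrite !GtermE // -ceil_st ltr_pM2r ?invr_gt0 //.
apply: affine_tan_increasing; rewrite ?in_itv /= ?phase_itv //.
  by have [m m0 ->] := ceil_gt0_natE _ sb_gt0; rewrite ler_peMl ?pi_ge0 ?ler1n.
by rewrite /phase -ceil_st ltr_pM2l ?ltrD2l ?ltrN2 ?divr_gt0 ?pi_gt0.
Qed.

Lemma Gterm_continuous b k : k * b / pi < (Num.ceil (k * b / pi))%:~R ->
  {for k, continuous (Gterm b)}.
Proof.
move=> kb_lt; set c := Num.ceil (k * b / pi).
have scale_cont : {for k, continuous (fun k => k * b / pi)}.
  by apply: cvgMl; apply: cvgMl; exact: cvg_id.
have Gterm_near : {near k, (fun k => k * tan (pi / 2 * (c%:~R - k * b / pi))) =1 Gterm b}.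
  near=> k'; rewrite /Gterm /phase (_ : Num.ceil _ = c) //.
  by near: k'; exact: scale_cont _ (near_ceil_eq _ kb_lt).
rewrite /prop_for /continuous_at -(nbhs_singleton Gterm_near).
apply: cvg_trans (near_eq_cvg Gterm_near) _; apply: cvgM; first exact: cvg_id.
apply: (continuous_comp (f := fun k => pi / 2 * (c%:~R - k * b / pi))).
  by apply: cvgMr; apply: cvgB; [exact: cvg_cst | exact: scale_cont].
exact/continuous_tan/cos_phase_neq0.
Unshelve. all: by end_near.
Qed.

Lemma Gterm_cvgy b (m : nat) : 0 < b -> (0 < m)%N ->
  Gterm b k @[k --> (m%:R * pi / b)^'+] --> +oo.
Proof.
move=> b0 m0; set k0 := m%:R * pi / b.
have k0_gt0 : 0 < k0 by rewrite divr_gt0 ?mulr_gt0 ?pi_gt0 ?ltr0n.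
have k0E : k0 * b / pi = m%:R.
  by rewrite /k0 divfK ?mulfK ?gt_eqF ?pi_gt0.
have scale_cvg : (k * b / pi) @[k --> k0^'+] --> (m%:R : R)^'+.
  apply: cvg_within_near.
    rewrite -k0E; apply: cvg_at_right_filter.
    by apply: cvgMl; apply: cvgMl; exact: cvg_id.
  by near=> k; rewrite -k0E !ltr_pM2r ?invr_gt0 ?pi_gt0.
have tan_cvg := cvg_comp _ _ (cvg_comp _ _ scale_cvg (phase_cvg_right m)) tan_cvgy_pihalf.
apply: (ger_cvgy _ (gt0_cvgMry k0_gt0 tan_cvg)).
near=> k; apply: ler_wpM2r; first exact: tan_phase_ge0.
by near: k; exact: nbhs_right_ge.
Unshelve. all: by end_near.
Qed.

End phase.

Section Gfun.
Context {R : realType} {d : nat} {a : 'I_d -> R}.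
Hypothesis a_gt0 : forall j, 0 < a j.

Lemma GfunE k : Gfun a k = 2 * \sum_(j < d) Gterm (a j) k.
Proof. by rewrite /Gfun -mulrA mulr_sumr. Qed.

Lemma Gfun_continuous k : (forall j, k * a j / pi < (Num.ceil (k * a j / pi))%:~R) ->
  {for k, continuous (Gfun a)}.
Proof.
move=> kb_lt; have -> : Gfun a = fun k => 2 * \sum_(j < d) Gterm (a j) k.
  exact/funext/GfunE.
apply: cvgMr; apply: (cvg_big (op := +%R) (x0 := 0) (P := xpredT) add_continuous) => j _.
exact: Gterm_continuous.
Qed.

Lemma Gfun_ge_Gterm j k : 0 <= k -> 2 * Gterm (a j) k <= Gfun a k.
Proof.
move=> k0; rewrite GfunE ler_pM2l // (bigD1 j) //= lerDl.
by apply: sumr_ge0 => i _; exact: Gterm_ge0.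
Qed.

Lemma Gfun_cvgy j (m : nat) : (0 < m)%N -> Gfun a k @[k --> (m%:R * pi / a j)^'+] --> +oo.
Proof.
move=> m0; have two_gt0 : 0 < 2 :> R by [].
apply: (ger_cvgy _ (gt0_cvgMry two_gt0 (Gterm_cvgy _ _ (a_gt0 j) m0))).
near=> k; apply: Gfun_ge_Gterm; apply: (le_trans _ (_ : m%:R * pi / a j <= k)).
  by rewrite divr_ge0 ?mulr_ge0 ?pi_ge0 ?(ltW (a_gt0 j)).
by near: k; exact: nbhs_right_ge.
Unshelve. all: by end_near.
Qed.

Lemma Gfun_discontinuous j (m : nat) : (0 < m)%N ->
  ~ {for m%:R * pi / a j, continuous (Gfun a)}.
Proof. by move=> m0; apply: cvgry_right_not_continuous; exact: Gfun_cvgy. Qed.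

End Gfun.

Theorem lemma3p2 (R : realType) (d : nat) (a : 'I_d -> R)
  (hd : (1 <= d)%N) (ha : forall j, 0 < a j) :
  (* (i) discontinuities *)
  (forall k : R, 0 < k ->
     (~ {for k, continuous (Gfun a)} <->
      exists (j : 'I_d) (m : nat), (1 <= m)%N /\ k = m%:R * pi / a j))
  /\
  (* (ii) strictly decreasing on every open interval of continuity *)
  (forall x y : R, 0 < x -> x < y ->
     (forall z, x < z < y -> {for z, continuous (Gfun a)}) ->
     forall s t, x < s -> s < t -> t < y -> Gfun a t < Gfun a s)
  /\
  (* (iii) right limit +oo at each m pi / a_j *)
  (forall (j : 'I_d) (m : nat), (1 <= m)%N ->
     Gfun a k @[k --> (m%:R * pi / a j)^'+] --> +oo).
Proof.
split; [|split]; last exact: Gfun_cvgy.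
- move=> k k0; split=> [discont | [j [m [m0 ->]]]]; last exact: Gfun_discontinuous.
  apply: contrapT => off_grid; apply/discont/Gfun_continuous => j.
  rewrite lt_neqAle ceil_ge andbT; apply/negP.
  move=> /eqP/esym/(ceil_eq_grid _ _ (ha j) k0) [m m0 km].
  by apply: off_grid; exists j, m.
- move=> x y x0 xy cont s t xs st ty; have s0 := lt_trans x0 xs.
  rewrite !GfunE ltr_pM2l //; apply: ltr_sum => [|j _].
    by apply/hasP; exists (Ordinal hd); rewrite ?mem_index_enum.
  apply: Gterm_decreasing => //; apply/eqP; apply: contraT.
  move=> /(ceil_neq_grid _ _ _ (ha j) s0 (ltW st)) [m m0 /andP[sm mt]].
  exfalso; apply: (Gfun_discontinuous ha j m m0); apply: cont.
  by rewrite (lt_le_trans xs sm) (lt_trans mt ty).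
Qed.
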